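(* Let $N\ge 2$, $p\ge 2$, $0<r_0<R_0\le\infty$, $\Omega=B]r_0,R_0[$, and let $V\in C(\Omega)$ satisfy either $V>0$ in $\Omega$ or $V\equiv 0$. Let $u$ be a positive radial strictly monotone $C^2$-subsolution and $v$ a positive radial strictly monotone $C^2$-supersolution of $-\Delta_p w-V|w|^{p-2}w=0$ in $\Omega$. Then at least one of the following holds: (i) $(u/v)'(r)\le 0$ for all $r\in[r_0,R_0[$; (ii) there exists $\rho^*\in[r_0,R_0[$ such that $(u/v)'(r)\ge 0$ for all $r\in[\rho^*,R_0[$.
   Context: $\Delta_p w=\nabla\cdot(|\nabla w|^{p-2}\nabla w)$. $B]r_0,R_0[=\{x\in\mathbb{R}^N: r_0<|x|<R_0\}$, $B[r_0,R_0[=\{x: r_0\le|x|<R_0\}$. A $C^2$-subsolution (resp. supersolution) in $\Omega$ is $w\in C^2(B[r_0,R_0[)$ with $-\Delta_p w-V|w|^{p-2}w\le 0$ (resp. $\ge0$) pointwise in $\Omega$. Radial functions $w(x)=\phi(|x|)$ are identified with $\phi$ and $'$ denotes derivative in $r=|x|$; strictly monotone means $w'>0$ on $[r_0,R_0[$ or $w'<0$ on $[r_0,R_0[$. *)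

From HB Require Import structures.
From mathcomp Require Import all_boot all_order all_algebra.
From mathcomp Require Import all_classical all_reals all_analysis.
Set Implicit Arguments. Unset Strict Implicit. Unset Printing Implicit Defensive.
Import Order.TTheory GRing.Theory Num.Theory.
Import numFieldNormedType.Exports.
Local Open Scope ring_scope.

Definition eucl {R : realType} {N : nat} (x : 'rV[R]_N) : R :=
  Num.sqrt (\sum_(i < N) (x 0 i) ^+ 2).

Definition ebase {R : realType} {N : nat} (i : 'I_N) : 'rV[R]_N := delta_mx 0 i.

Definition grad {R : realType} {N : nat} (w : 'rV[R]_N -> R) (x : 'rV[R]_N)
  : 'rV[R]_N := \row_(i < N) derive w x (ebase i).

Definition plap {R : realType} {N : nat} (p : R) (w : 'rV[R]_N -> R)
  (x : 'rV[R]_N) : R :=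
  \sum_(i < N)
     derive (fun y => powR (eucl (grad w y)) (p - 2) * (grad w y) 0 i)
            x (ebase i).

Definition in_annulus {R : realType} {N : nat} (r0 : R) (R0 : \bar R)
  (x : 'rV[R]_N) : Prop := r0 < eucl x /\ ((eucl x)%:E < R0)%E.

Definition radial {R : realType} (N : nat) (phi : R -> R) : 'rV[R]_N -> R :=
  fun x => phi (eucl x).

(* phi is C^2 on [r0, R0[ (up to the inner boundary): it is C^2 on some
   open interval ]r0 - d, R0[ with d > 0. *)
Definition C2_profile {R : realType} (r0 : R) (R0 : \bar R) (phi : R -> R)
  : Prop :=
  exists2 d : R, 0 < d & forall r : R, r0 - d < r -> (r%:E < R0)%E ->
    [/\ derivable phi r 1, derivable (derive1 phi) r 1
      & {for r, continuous (derive1 (derive1 phi))}].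

Definition subsolution {R : realType} {N : nat} (p : R) (V : 'rV[R]_N -> R)
  (r0 : R) (R0 : \bar R) (w : 'rV[R]_N -> R) : Prop :=
  forall x, in_annulus r0 R0 x ->
    - plap p w x - V x * (powR `|w x| (p - 2) * w x) <= 0.

Definition supersolution {R : realType} {N : nat} (p : R) (V : 'rV[R]_N -> R)
  (r0 : R) (R0 : \bar R) (w : 'rV[R]_N -> R) : Prop :=
  forall x, in_annulus r0 R0 x ->
    - plap p w x - V x * (powR `|w x| (p - 2) * w x) >= 0.

Definition strictly_monotone_profile {R : realType} (r0 : R) (R0 : \bar R)
  (phi : R -> R) : Prop :=
  (forall r, r0 <= r -> (r%:E < R0)%E -> 0 < derive1 phi r) \/
  (forall r, r0 <= r -> (r%:E < R0)%E -> derive1 phi r < 0).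

From HB Require Import structures.
From mathcomp Require Import all_boot all_order all_algebra.
From mathcomp Require Import all_classical all_reals all_analysis.
From mathcomp Require Import ring lra.
Import Order.TTheory GRing.Theory Num.Theory.
Import numFieldNormedType.Exports.
Local Open Scope ring_scope.
Local Open Scope classical_set_scope.
Set Implicit Arguments. Unset Strict Implicit. Unset Printing Implicit Defensive.

(* Write [spow p t = |t|^(p-2) t].  For a radial profile [phi] the p-Laplacian
   of [phi(|x|)] at distance [r] is [(spow p \o phi')'(r) + (N-1) spow p (phi' r) / r],
   so [u] and [v] satisfy opposite one-dimensional differential inequalities.
   When [phi'] and [psi'] have the same sign, the p-Wronskian
   [F = spow p phi' * psi^(p-1) - spow p psi' * phi^(p-1)] equals
   [spow p (phi' psi) - spow p (psi' phi)] and therefore has the sign of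
   [(phi/psi)'].  Subtracting the two inequalities the potential terms cancel, and where [F < 0]
   one gets [F' >= c F] with [c = (p-1) |phi'| / phi] continuous; hence [F]
   cannot become negative after being positive, which gives (ii), while if
   [F] is never positive we are in (i).  When [phi'] and [psi'] have opposite
   signs, [(phi/psi)'] has a constant sign directly. *)

Lemma derive_along_line (R : numFieldType) (V : normedModType R) (f : V -> R) a v :
  derive f a v = derive (fun h : R => f (h *: v + a)) 0 1.
Proof.
rewrite /derive; set g1 := fun h => h^-1 *: _; set g2 := fun h => h^-1 *: _.
suff -> : g1 = g2 by [].
by apply/funext => h; rewrite /g1 /g2 /= addr0 scale0r add0r [_%:A]mulr1.
Qed.

Lemma is_derive_sqrt_quadratic (R : realType) (c k : R) : 0 < c ->
  is_derive (0 : R) 1 (fun h : R => Num.sqrt (c + h * k + h ^+ 2))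
    ((2 * Num.sqrt c)^-1 * k).
Proof.
move=> c_gt0.
have dq : is_derive (0 : R) 1 (fun h : R => c + h * k + h ^+ 2) k.
  by apply: is_derive_eq; rewrite !scale0r !add0r addr0 mul1r [_%:A]mulr1.
have dsqrt : is_derive (c + 0 * k + 0 ^+ 2) 1 Num.sqrt (2 * Num.sqrt c)^-1.
  by rewrite mul0r addr0 expr0n /= addr0; apply: is_derive1_sqrt.
exact: (@is_derive1_comp R Num.sqrt _ 0 _ _ dsqrt dq).
Qed.

Section EuclideanNorm.
Variables (R : realType) (N : nat).
Implicit Types (y : 'rV[R]_N) (j : 'I_N).

Definition sqeucl y : R := \sum_(i < N) y 0 i ^+ 2.

Lemma euclE y : eucl y = Num.sqrt (sqeucl y). Proof. by []. Qed.

Lemma sqeucl_shift y j h :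
  sqeucl (h *: ebase j + y) = sqeucl y + h * (2 * y 0 j) + h ^+ 2.
Proof.
rewrite /sqeucl /ebase.
under eq_bigr => k _ do rewrite !mxE /=.
rewrite (bigD1 j) //= eqxx (bigD1 j (P := predT)) //=.
under eq_bigr => k /negbTE kj do rewrite kj mulr0 add0r.
by rewrite mulr1; ring.
Qed.

Lemma eucl_scale y c : eucl (c *: y) = `|c| * eucl y.
Proof.
rewrite !euclE /sqeucl.
under eq_bigr => i _ do rewrite mxE exprMn.
by rewrite -mulr_sumr sqrtrM ?sqr_ge0 // sqrtr_sqr.
Qed.

Lemma eucl_ebase j : eucl (ebase j : 'rV[R]_N) = 1.
Proof.
rewrite euclE /sqeucl (bigD1 j) //= big1 => [|k kj]; last first.
  by rewrite /ebase mxE (negbTE kj) andbF expr0n.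
by rewrite /ebase mxE !eqxx expr1n addr0 sqrtr1.
Qed.

Lemma eucl_scale_ebase j r : 0 < r -> eucl (r *: ebase j : 'rV[R]_N) = r.
Proof. by move=> r_gt0; rewrite eucl_scale eucl_ebase mulr1 gtr0_norm. Qed.

End EuclideanNorm.

Section SignedPower.
Variables (R : realType) (p : R).

Definition spow (t : R) : R := powR `|t| (p - 2) * t.

Hypothesis p_ge2 : 2 <= p.

Let p1_gt0 : 0 < p - 1.
Proof. by rewrite subr_gt0 (lt_le_trans _ p_ge2) // ltr1n. Qed.

Let p2_ge0 : 0 <= p - 2.
Proof. by rewrite subr_ge0. Qed.

Lemma spowN t : spow (- t) = - spow t.
Proof. by rewrite /spow normrN mulrN. Qed.

Lemma spow_ge0E t : 0 <= t -> spow t = powR t (p - 1).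
Proof.
rewrite le_eqVlt => /predU1P[<-|t_gt0]; first by rewrite /spow mulr0 powR0 ?gt_eqF.
have -> : p - 1 = (p - 2) + 1 by ring.
by rewrite /spow gtr0_norm // (powRD (r := p - 2) (s := 1)) ?powRr1 ?ltW // (gt_eqF t_gt0) implybT.
Qed.

Lemma spowMr d y : 0 < y -> spow (d * y) = spow d * powR y (p - 1).
Proof.
move=> y_gt0; rewrite -spow_ge0E ?ltW // /spow normrM (gtr0_norm y_gt0).
by rewrite powRM ?normr_ge0 ?ltW // -!mulrA; congr (_ * _); exact: mulrCA.
Qed.

Lemma ltr_spow : {mono spow : x y / x < y}.
Proof.
apply/leW_mono/le_mono.
have pos s t : 0 <= s -> s < t -> spow s < spow t.
  move=> s_ge0 st; rewrite !spow_ge0E ?(le_trans s_ge0 (ltW st)) //.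
  by apply: gt0_ltr_powR; rewrite ?nnegrE ?(le_trans s_ge0 (ltW st)).
move=> s t st; have [s_ge0|s_lt0] := leP 0 s; first exact: pos.
have [t_le0|t_gt0] := leP t 0.
  by have := pos (- t) (- s); rewrite !spowN ltrN2 oppr_ge0 ltrN2; apply.
rewrite -[s]opprK spowN spow_ge0E ?oppr_ge0 ?(ltW s_lt0) // spow_ge0E ?ltW //.
by apply: (@lt_trans _ _ 0); rewrite ?oppr_lt0 powR_gt0 // oppr_gt0.
Qed.

Lemma spow_sub_le a b : 0 < a * b -> a <= b ->
  spow a - spow b <= `|b| * (powR `|a| (p - 2) - powR `|b| (p - 2)).
Proof.
move=> ab_gt0 ab; rewrite /spow -subr_ge0.
set A := powR `|a| (p - 2); set B := powR `|b| (p - 2).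
have -> : `|b| * (A - B) - (A * a - B * b) = A * (b - a) + (`|b| - b) * (A - B).
  by ring.
apply: addr_ge0; first by rewrite mulr_ge0 ?powR_ge0 ?subr_ge0.
have [b_ge0|b_lt0] := leP 0 b; first by rewrite ger0_norm // subrr mul0r.
have a_lt0 : a < 0 by rewrite -(nmulr_lgt0 _ b_lt0).
apply: mulr_ge0; first by rewrite subr_ge0 ler_norm.
rewrite subr_ge0; apply: ge0_ler_powR; rewrite ?nnegrE ?normr_ge0 //.
by rewrite !ltr0_norm // lerN2.
Qed.

Lemma derivable_spow_comp (f : R -> R) t :
  derivable f t 1 -> f t != 0 -> derivable (spow \o f) t 1.
Proof.
move=> df ft_neq0.
have -> : spow \o f = (fun s => powR (f s ^+ 2) ((p - 2) / 2)) * f.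
  apply/funext => s; rewrite -[RHS]/(powR (f s ^+ 2) ((p - 2) / 2) * f s).
  rewrite /spow /= -real_normK ?num_real //.
  rewrite -powR_mulrn ?normr_ge0 // -powRrM; congr (powR _ _ * _).
  by rewrite mulrC mulfVK ?pnatr_eq0.
apply: derivableM => //.
have df2 : is_derive t 1 (fun s => f s ^+ 2) (2 * f t * derive1 f t).
  have := derivableP df; rewrite derive1E => dfD.
  by apply: is_derive_eq; rewrite /GRing.scale /=; ring.
have f2_gt0 : 0 < f t ^+ 2 by rewrite exprn_even_gt0.
by case: (@is_derive1_comp R (fun x => powR x ((p - 2) / 2)) _ t _ _
  (is_derive1_powR _ f2_gt0) df2).
Qed.

End SignedPower.

Section RadialPLaplacian.
Variables (R : realType) (N : nat) (p : R).
Implicit Types (phi : R -> R) (y : 'rV[R]_N).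

Definition pflux (w : 'rV[R]_N -> R) y (i : 'I_N) : R :=
  powR (eucl (grad w y)) (p - 2) * grad w y 0 i.

Lemma plapE w x : plap p w x = \sum_(i < N) derive (pflux w ^~ i) x (ebase i).
Proof. by []. Qed.

Lemma eucl_shift y j h :
  eucl (h *: ebase j + y) = Num.sqrt (sqeucl y + h * (2 * y 0 j) + h ^+ 2).
Proof. by rewrite euclE sqeucl_shift. Qed.

Lemma derive_radial phi y j : 0 < eucl y -> derivable phi (eucl y) 1 ->
  derive (@radial R N phi) y (ebase j) = derive1 phi (eucl y) * (y 0 j / eucl y).
Proof.
move=> y_gt0 dphi; rewrite derive_along_line.
set s := fun h : R => Num.sqrt (sqeucl y + h * (2 * y 0 j) + h ^+ 2).
have -> : (fun h : R => @radial R N phi (h *: ebase j + y)) = phi \o s.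
  by apply/funext => h; rewrite /radial eucl_shift.
have s0 : s 0 = eucl y by rewrite /s mul0r addr0 expr0n /= addr0.
have y2_gt0 : 0 < sqeucl y by rewrite -sqrtr_gt0 -euclE.
have ds := is_derive_sqrt_quadratic (2 * y 0 j) y2_gt0.
have dphi' : is_derive (s 0) 1 phi (derive1 phi (eucl y)).
  by rewrite s0 derive1E; exact: derivableP.
case: (is_derive1_comp dphi' ds) => _ ->.
by rewrite -euclE; field; rewrite gt_eqF.
Qed.

Lemma grad_radial phi y : 0 < eucl y -> derivable phi (eucl y) 1 ->
  grad (@radial R N phi) y = (derive1 phi (eucl y) / eucl y) *: y.
Proof.
by move=> y_gt0 dphi; apply/rowP => j; rewrite !mxE derive_radial // mulrA mulrAC.
Qed.

Lemma pflux_radial phi y i : 0 < eucl y -> derivable phi (eucl y) 1 ->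
  pflux (@radial R N phi) y i = spow p (derive1 phi (eucl y)) * (y 0 i / eucl y).
Proof.
move=> y_gt0 dphi; rewrite /pflux grad_radial // eucl_scale mxE normrM.
rewrite (gtr0_norm (x := (eucl y)^-1)) ?invr_gt0 // mulfVK ?gt_eqF // /spow.
by rewrite !mulrA [_ / eucl y * _]mulrAC.
Qed.

Section OnTheRay.
Variables (phi : R -> R) (r : R) (i0 : 'I_N).
Hypotheses (r_gt0 : 0 < r) (dphi : \forall s \near r, derivable phi s 1).

Let x : 'rV[R]_N := r *: ebase i0.

Lemma derive_pflux_radial_diag :
  derive (pflux (@radial R N phi) ^~ i0) x (ebase i0) = derive1 (spow p \o derive1 phi) r.
Proof.
rewrite derive_along_line derive1E (derive_along_line (spow p \o derive1 phi)).
apply: near_eq_derive; move: dphi (lt_nbhsr r_gt0) => /nbhs0P dphi' /nbhs0P pos.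
near=> h; have rh_gt0 : 0 < r + h by near: h.
rewrite /x -scalerDl [h + r]addrC pflux_radial ?eucl_scale_ebase //; last by near: h.
by rewrite /ebase !mxE !eqxx mulr1 divff ?gt_eqF // mulr1 [_%:A]mulr1 addrC.
Unshelve. all: by end_near. Qed.

Lemma derive_pflux_radial_offdiag i : i != i0 -> derivable (spow p \o derive1 phi) r 1 ->
  derive (pflux (@radial R N phi) ^~ i) x (ebase i) = spow p (derive1 phi r) / r.
Proof.
move=> ni0 dG; rewrite derive_along_line.
have x_gt0 : 0 < sqeucl x by rewrite -sqrtr_gt0 -euclE eucl_scale_ebase.
have xi : x 0 i = 0 by rewrite /x /ebase !mxE (negbTE ni0) mulr0.
have ds := is_derive_sqrt_quadratic (2 * x 0 i) x_gt0.
set s := fun h => Num.sqrt (sqeucl x + h * (2 * x 0 i) + h ^+ 2) in ds.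
have s0 : s 0 = r by rewrite /s mul0r addr0 expr0n /= addr0 -euclE eucl_scale_ebase.
have s_gt0 h : 0 < s h.
  by rewrite /s xi mulr0 mulr0 addr0 sqrtr_gt0 (lt_le_trans x_gt0) // lerDl sqr_ge0.
set m := fun h => spow p (derive1 phi (s h)) / s h.
have dm : derivable m 0 1.
  apply: derivableM; last by apply: derivableV; [rewrite gt_eqF | case: ds].
  have dG' : is_derive (s 0) 1 (spow p \o derive1 phi) ('D_1 (spow p \o derive1 phi) r).
    by rewrite s0; exact: derivableP.
  by case: (is_derive1_comp dG' ds).
transitivity ('D_1 (id * m) 0).
  apply: near_eq_derive.
  have s_cvg : s h @[h --> 0] --> r.
    by rewrite -s0; apply/differentiable_continuous/derivable1_diffP; case: ds.
  have phi_near : \forall h \near 0, derivable phi (s h) 1 := s_cvg _ dphi.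
  near=> h.
  have xh : eucl (h *: ebase i + x) = s h by rewrite eucl_shift.
  have xhi : (h *: ebase i + x) 0 i = h by rewrite mxE xi addr0 /ebase !mxE !eqxx mulr1.
  rewrite pflux_radial xh ?xhi ?s_gt0 //; last by near: h.
  by rewrite -[RHS]/(h * m h) mulrCA.
case: (@is_deriveM R R id m 0 1 1 _ (is_derive_id _ _) (derivableP dm)) => _ ->.
by rewrite scale0r add0r [_%:A]mulr1 /m s0.
Unshelve. all: by end_near. Qed.

Lemma plap_radial : derivable (spow p \o derive1 phi) r 1 ->
  plap p (@radial R N phi) x =
  derive1 (spow p \o derive1 phi) r + N.-1%:R * (spow p (derive1 phi r) / r).
Proof.
move=> dG; rewrite plapE (bigD1 i0) //= derive_pflux_radial_diag.
rewrite (eq_bigr _ (fun i ni0 => derive_pflux_radial_offdiag ni0 dG)).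
by rewrite sumr_const cardC1 card_ord mulr_natl.
Qed.

End OnTheRay.
End RadialPLaplacian.

Section RealDerivatives.
Variable R : realType.
Implicit Types (f g F E c : R -> R).

Lemma derive1_div f g t : derivable f t 1 -> derivable g t 1 -> g t != 0 ->
  derive1 (fun s => f s / g s) t =
  (derive1 f t * g t - f t * derive1 g t) / g t ^+ 2.
Proof.
move=> df dg gt_neq0; rewrite derive1E.
have dgV := is_deriveV gt_neq0 (derivableP dg).
case: (is_deriveM (derivableP df) dgV) => _ ->.
by rewrite /GRing.scale /= !derive1E; field.
Qed.

Lemma is_derive_powR_comp f q t : derivable f t 1 -> 0 < f t ->
  is_derive t 1 (fun s => powR (f s) q) (q * powR (f t) (q - 1) * derive1 f t).
Proof.
move=> df ft_gt0; rewrite derive1E.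
exact: (@is_derive1_comp R (fun x => powR x q) f t _ _
  (is_derive1_powR q ft_gt0) (derivableP df)).
Qed.

Lemma is_derive_mul_expR F K t : derivable F t 1 ->
  is_derive t 1 (fun s => F s * expR (- K * s))
    ((derive1 F t - K * F t) * expR (- K * t)).
Proof.
move=> dF; rewrite derive1E.
have dlin : is_derive t 1 (fun s : R => - K * s) (- K).
  by apply: is_derive_eq; rewrite [_%:A]mulr1.
have dexp := @is_derive1_comp R expR _ t _ _ (is_derive_expR (- K * t)) dlin.
have := is_deriveM (derivableP dF) dexp => dprod.
by apply: is_derive_eq; rewrite /GRing.scale /=; ring.
Qed.

Lemma derive1_gt0_left E a m : a < m -> derivable E m 1 -> 0 < derive1 E m ->
  exists2 t, a <= t < m & E t < E m.
Proof.
move=> am dE; rewrite derive1E => /(cvgr_gt _ dE) [e /= e_gt0 He].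
set h := - Num.min (e / 2) (m - a).
have h_lt0 : h < 0 by rewrite oppr_lt0 lt_min divr_gt0 ?subr_gt0.
have h_ge : - (m - a) <= h by rewrite lerN2 ge_min lexx orbT.
have h_gt : - e < h by rewrite ltrN2 gt_min; apply/orP; left; lra.
have /= := He h; rewrite sub0r normrN ltr0_norm // [_%:A]mulr1 ltrNl.
move=> /(_ h_gt (negbT (lt_eqF h_lt0))); rewrite nmulr_rgt0 ?invr_lt0 // subr_lt0.
by exists (h + m) => //; apply/andP; split; lra.
Qed.

(* For [K > max c], [F t * expR (- K t)] has a positive derivative wherever
   [F < 0], so it cannot attain a negative minimum on [[a, b]]. *)
Lemma gronwall_barrier F c a b : a <= b ->
  {in `[a, b]%R, forall t, derivable F t 1} ->
  {within `[a, b], continuous c} ->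
  {in `]a, b]%R, forall t, F t < 0 -> c t * F t <= derive1 F t} ->
  0 < F a -> 0 <= F b.
Proof.
move=> ab dF cc Fc Fa_gt0; rewrite leNgt; apply/negP => Fb_lt0.
have [M _ cM] := EVT_max ab cc.
set K := c M + 1; set E := fun t => F t * expR (- K * t).
have dE t : t \in `[a, b]%R -> is_derive t 1 E ((derive1 F t - K * F t) * expR (- K * t)).
  by move/dF; exact: is_derive_mul_expR.
have cE : {within `[a, b], continuous E}.
  by apply: derivable_within_continuous => t tab; case: (dE t tab).
have [m mab Em_min] := EVT_min ab cE.
have sgnE t : (E t < 0) = (F t < 0) by rewrite /E pmulr_llt0 ?expR_gt0.
have Em_lt0 : E m < 0.
  by apply: le_lt_trans (Em_min b _) _; rewrite ?sgnE // in_itv /= ab lexx.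
have Ea_gt0 : 0 < E a by rewrite /E pmulr_lgt0 ?expR_gt0.
move: (mab); rewrite in_itv /= => /andP[am mb].
have am' : a < m by rewrite lt_neqAle am andbT; apply: contraTneq Em_lt0 => <-; rewrite -leNgt ltW.
have Fm_lt0 : F m < 0 by rewrite -sgnE.
have [dEm dEm_val] := dE m mab.
have dEm_gt0 : 0 < derive1 E m.
  rewrite derive1E dEm_val pmulr_lgt0 ?expR_gt0 //.
  have := Fc m; rewrite in_itv /= am' mb => /(_ isT Fm_lt0).
  have := cM m mab; rewrite /K; nra.
have [t /andP[ta tm] Et] := derive1_gt0_left am' dEm dEm_gt0.
have := Em_min t; rewrite in_itv /= ta (ltW (lt_le_trans tm mb)) => /(_ isT).
by rewrite leNgt Et.
Qed.

End RealDerivatives.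

Section RadialComparison.
Variables (R : realType) (p k a b : R) (phi psi W : R -> R).
Hypotheses (p_ge2 : 2 <= p) (k_ge0 : 0 <= k) (a_ge0 : 0 <= a).
Hypotheses (dphi : {in `[a, b]%R, forall t, derivable phi t 1})
  (dpsi : {in `[a, b]%R, forall t, derivable psi t 1})
  (d2phi : {in `[a, b]%R, forall t, derivable (derive1 phi) t 1})
  (d2psi : {in `[a, b]%R, forall t, derivable (derive1 psi) t 1})
  (phi_gt0 : {in `[a, b]%R, forall t, 0 < phi t})
  (psi_gt0 : {in `[a, b]%R, forall t, 0 < psi t})
  (same_monotony : {in `[a, b]%R, forall t, 0 < derive1 phi t * derive1 psi t}).
Hypotheses
  (phi_sub : {in `]a, b]%R, forall t, 0 <= derive1 (spow p \o derive1 phi) t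
     + k * (spow p (derive1 phi t) / t) + W t * powR (phi t) (p - 1)})
  (psi_super : {in `]a, b]%R, forall t, derive1 (spow p \o derive1 psi) t
     + k * (spow p (derive1 psi t) / t) + W t * powR (psi t) (p - 1) <= 0}).

Definition pwronskian t :=
  spow p (derive1 phi t) * powR (psi t) (p - 1) -
  spow p (derive1 psi t) * powR (phi t) (p - 1).

Lemma pwronskianE t : t \in `[a, b]%R ->
  pwronskian t = spow p (derive1 phi t * psi t) - spow p (derive1 psi t * phi t).
Proof. by move=> tab; rewrite /pwronskian !(spowMr p_ge2) ?phi_gt0 ?psi_gt0. Qed.

Let quotient_derive t : t \in `[a, b]%R ->
  derive1 (fun s => phi s / psi s) t =
  (derive1 phi t * psi t - derive1 psi t * phi t) / psi t ^+ 2.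
Proof.
move=> tab; rewrite derive1_div ?gt_eqF ?psi_gt0 ?[phi t * _]mulrC //.
- exact: dphi.
- exact: dpsi.
Qed.

Lemma pwronskian_gt0 t : t \in `[a, b]%R ->
  (0 < pwronskian t) = (0 < derive1 (fun s => phi s / psi s) t).
Proof.
move=> tab; rewrite pwronskianE // quotient_derive // pmulr_lgt0 ?invr_gt0 ?exprn_gt0 ?psi_gt0 //.
by rewrite !subr_gt0 (ltr_spow p_ge2).
Qed.

Lemma pwronskian_lt0 t : t \in `[a, b]%R ->
  (pwronskian t < 0) = (derive1 (fun s => phi s / psi s) t < 0).
Proof.
move=> tab; rewrite pwronskianE // quotient_derive // pmulr_llt0 ?invr_gt0 ?exprn_gt0 ?psi_gt0 //.
by rewrite !subr_lt0 (ltr_spow p_ge2).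
Qed.

Let G := spow p \o derive1 phi.
Let H := spow p \o derive1 psi.
Let P t := powR (phi t) (p - 1).
Let Q t := powR (psi t) (p - 1).
Let dP t := (p - 1) * powR (phi t) (p - 2) * derive1 phi t.
Let dQ t := (p - 1) * powR (psi t) (p - 2) * derive1 psi t.

Let derive1_phi_neq0 t : t \in `[a, b]%R -> derive1 phi t != 0.
Proof. by move/same_monotony; apply: contraTneq => ->; rewrite mul0r ltxx. Qed.

Let derive1_psi_neq0 t : t \in `[a, b]%R -> derive1 psi t != 0.
Proof. by move/same_monotony; apply: contraTneq => ->; rewrite mulr0 ltxx. Qed.

Let is_derive_pwronskian t : t \in `[a, b]%R ->
  is_derive t 1 pwronskian
    (derive1 G t * Q t + G t * dQ t - (derive1 H t * P t + H t * dP t)).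
Proof.
move=> tab.
have dG : derivable G t 1.
  by apply: derivable_spow_comp; [exact: d2phi | exact: derive1_phi_neq0].
have dH : derivable H t 1.
  by apply: derivable_spow_comp; [exact: d2psi | exact: derive1_psi_neq0].
have dQt := is_derive_powR_comp (p - 1) (dpsi tab) (psi_gt0 tab).
have dPt := is_derive_powR_comp (p - 1) (dphi tab) (phi_gt0 tab).
have := is_deriveB (is_deriveM (derivableP dG) dQt) (is_deriveM (derivableP dH) dPt).
rewrite (_ : p - 1 - 1 = p - 2); last by ring.
move=> dW; apply: is_derive_eq; rewrite /GRing.scale /= -!derive1E.
rewrite -/(dP t) -/(dQ t) -/(P t) -/(Q t).
by move: (G t) (H t) (P t) (Q t) (dP t) (dQ t) (derive1 G t) (derive1 H t) => *; ring.
Qed.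

Let c t := (p - 1) * (`|derive1 phi t| / phi t).

Let continuous_c : {within `[a, b], continuous c}.
Proof.
apply: continuous_in_subspaceT => t /[1!inE] tab.
have cphi := differentiable_continuous ((derivable1_diffP _ _).1 (dphi tab)).
have cphi' := differentiable_continuous ((derivable1_diffP _ _).1 (d2phi tab)).
apply: cvgM; first exact: cvg_cst.
by apply: cvgM; [exact: cvg_norm | apply: cvgV; rewrite ?gt_eqF ?phi_gt0].
Qed.

Let pwronskian_derive_ge t : t \in `]a, b]%R -> pwronskian t < 0 ->
  c t * pwronskian t <= derive1 pwronskian t.
Proof.
move=> tab pw_lt0.
have t_gt0 : 0 < t by move: tab; rewrite in_itv /= => /andP[/(le_lt_trans a_ge0)].
have tab' : t \in `[a, b]%R by move: tab; rewrite !in_itv /= => /andP[/ltW -> ->].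
rewrite derive1E; case: (is_derive_pwronskian tab') => _ ->.
have phi_t := phi_gt0 tab'; have psi_t := psi_gt0 tab'.
have monot := same_monotony tab'.
have Pt : 0 < P t by exact: powR_gt0.
have Qt : 0 < Q t by exact: powR_gt0.
have pwE : pwronskian t = G t * Q t - H t * P t by [].
have transport : 0 <= derive1 G t * Q t - derive1 H t * P t.
  have E1 := mulr_ge0 (phi_sub tab) (ltW Qt).
  have E2 := mulr_le0_ge0 (psi_super tab) (ltW Pt).
  have E3 := mulr_ge0_le0 (divr_ge0 k_ge0 (ltW t_gt0)) (ltW pw_lt0).
  move: E1 E2 E3; rewrite pwE -/G -/H -[spow p (derive1 phi t)]/(G t).
  rewrite -[spow p (derive1 psi t)]/(H t) -/(P t) -/(Q t).
  move: (derive1 G t) (derive1 H t) (G t) (H t) (P t) (Q t) (W t) t^-1.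
  move=> g' h' g h P' Q' w u; lra.
set A := derive1 phi t * psi t; set B := derive1 psi t * phi t.
have AB_gt0 : 0 < A * B by rewrite mulrACA mulr_gt0 // mulr_gt0.
have AB : A <= B by move: pw_lt0; rewrite pwronskianE // subr_lt0 (ltr_spow p_ge2) => /ltW.
have flux : G t * dQ t - H t * dP t =
    (p - 1) * (derive1 phi t * derive1 psi t) * (powR `|A| (p - 2) - powR `|B| (p - 2)).
  rewrite /A /B !normrM (gtr0_norm phi_t) (gtr0_norm psi_t) !powRM ?normr_ge0 ?ltW //.
  rewrite /G /H /dP /dQ /spow /=.
  move: (powR `|derive1 phi t| (p - 2)) (powR `|derive1 psi t| (p - 2)).
  move: (powR (phi t) (p - 2)) (powR (psi t) (p - 2)) (derive1 phi t) (derive1 psi t).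
  by move=> *; ring.
have cB : c t * `|B| = (p - 1) * (derive1 phi t * derive1 psi t).
  rewrite /c /B -[in RHS](gtr0_norm monot) !normrM (gtr0_norm phi_t).
  by field; rewrite gt_eqF.
have c_ge0 : 0 <= c t.
  have p1_ge0 : 0 <= p - 1 by rewrite subr_ge0 (le_trans _ p_ge2) // ler1n.
  by rewrite /c mulr_ge0 // divr_ge0 // ltW.
rewrite pwronskianE //.
apply: le_trans (ler_wpM2l c_ge0 (spow_sub_le p_ge2 AB_gt0 AB)) _.
by rewrite mulrA cB -flux opprD addrACA -subr_ge0 addrK.
Qed.

Lemma derive1_ratio_ge0 : a <= b ->
  0 < derive1 (fun s => phi s / psi s) a -> 0 <= derive1 (fun s => phi s / psi s) b.
Proof.
move=> ab; have aab : a \in `[a, b]%R by rewrite in_itv /= lexx ab.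
have bab : b \in `[a, b]%R by rewrite in_itv /= lexx ab.
rewrite -(pwronskian_gt0 aab) leNgt -(pwronskian_lt0 bab) -leNgt => pw_a.
apply: (gronwall_barrier ab _ continuous_c pwronskian_derive_ge pw_a) => t tab.
by case: (is_derive_pwronskian tab).
Qed.

End RadialComparison.

Lemma near_lt_ereal (R : realType) (a r : R) (R0 : \bar R) : a < r -> (r%:E < R0)%E ->
  \forall s \near r, a < s /\ (s%:E < R0)%E.
Proof.
case: R0 => [b| |] //= ar rb.
- by near=> s; split; near: s; [exact: lt_nbhsr | apply: lt_nbhsl; rewrite -lte_fin].
- by near=> s; split; [near: s; exact: lt_nbhsr | exact: ltry].
Unshelve. all: by end_near. Qed.

Section RadialProfile.
Variables (R : realType) (N : nat) (p r0 : R) (R0 : \bar R).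
Variables (V : 'rV[R]_N -> R) (phi : R -> R) (i0 : 'I_N).
Hypotheses (p_ge2 : 2 <= p) (phi_C2 : C2_profile r0 R0 phi).

Lemma C2_profile_near r : r0 <= r -> (r%:E < R0)%E ->
  \forall s \near r, derivable phi s 1 /\ derivable (derive1 phi) s 1.
Proof.
case: phi_C2 => d d_gt0 C2 r0r rR0.
have : r0 - d < r by rewrite ltrBlDr (le_lt_trans r0r) // ltrDl.
move=> /near_lt_ereal /(_ rR0); apply: filterS => s [s_gt s_lt].
by case: (C2 s s_gt s_lt).
Qed.

Lemma C2_profile_derivable r : r0 <= r -> (r%:E < R0)%E ->
  derivable phi r 1 /\ derivable (derive1 phi) r 1.
Proof. by move=> r0r rR0; exact: nbhs_singleton (C2_profile_near r0r rR0). Qed.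

Lemma radial_operatorE r : 0 < r0 -> r0 <= r -> (r%:E < R0)%E ->
  0 < phi r -> derivable (spow p \o derive1 phi) r 1 ->
  - plap p (@radial R N phi) (r *: ebase i0) - V (r *: ebase i0) *
      (powR `|@radial R N phi (r *: ebase i0)| (p - 2) * @radial R N phi (r *: ebase i0))
  = - (derive1 (spow p \o derive1 phi) r + N.-1%:R * (spow p (derive1 phi r) / r)
       + V (r *: ebase i0) * powR (phi r) (p - 1)).
Proof.
move=> r0_gt0 r0r rR0 phi_gt0 dG.
have r_gt0 : 0 < r := lt_le_trans r0_gt0 r0r.
have dphi : \forall s \near r, derivable phi s 1.
  by apply: filterS (C2_profile_near r0r rR0) => s [].
rewrite plap_radial // /radial eucl_scale_ebase //.
rewrite -[powR _ _ * _]/(spow p (phi r)) (spow_ge0E p_ge2 (ltW phi_gt0)).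
by apply/esym; rewrite opprD.
Qed.

End RadialProfile.

Section RadialPair.
Variables (R : realType) (N : nat) (p r0 : R) (R0 : \bar R).
Variables (V : 'rV[R]_N -> R) (phi psi : R -> R) (i0 : 'I_N).
Hypotheses (p_ge2 : 2 <= p) (r0_gt0 : 0 < r0).
Hypotheses (phi_C2 : C2_profile r0 R0 phi) (psi_C2 : C2_profile r0 R0 psi).
Hypotheses (phi_gt0 : forall r, r0 <= r -> (r%:E < R0)%E -> 0 < phi r)
  (psi_gt0 : forall r, r0 <= r -> (r%:E < R0)%E -> 0 < psi r).
Hypotheses (phi_sub : subsolution p V r0 R0 (@radial R N phi))
  (psi_super : supersolution p V r0 R0 (@radial R N psi)).
Hypothesis same_monotony :
  forall r, r0 <= r -> (r%:E < R0)%E -> 0 < derive1 phi r * derive1 psi r.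

Lemma radial_ratio_derive_ge0 r1 r : r0 <= r1 -> r1 <= r -> (r%:E < R0)%E ->
  0 < derive1 (fun s => phi s / psi s) r1 -> 0 <= derive1 (fun s => phi s / psi s) r.
Proof.
move=> r0r1 r1r rR0.
have inI t : t \in `[r1, r]%R -> r0 <= t /\ (t%:E < R0)%E.
  rewrite in_itv /= => /andP[r1t tr]; split; first exact: le_trans r1t.
  by apply: le_lt_trans rR0; rewrite lee_fin.
have inIo t : t \in `]r1, r]%R -> r0 < t /\ (t%:E < R0)%E.
  move=> tI; have [r0t tR0] : r0 <= t /\ (t%:E < R0)%E.
    by apply: inI; move: tI; rewrite !in_itv /= => /andP[/ltW -> ->].
  by split; move: tI; rewrite // in_itv /= => /andP[/(le_lt_trans r0r1)].
have C2_on_I f : C2_profile r0 R0 f ->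
    {in `[r1, r]%R, forall t, derivable f t 1 /\ derivable (derive1 f) t 1}.
  by move=> f_C2 t /inI [r0t tR0]; have [] := C2_profile_derivable f_C2 r0t tR0.
have annulus t : r0 < t -> (t%:E < R0)%E -> in_annulus r0 R0 (t *: ebase i0 : 'rV[R]_N).
  by move=> r0t tR0; rewrite /in_annulus eucl_scale_ebase // (lt_trans r0_gt0).
have derivable_flux f t : C2_profile r0 R0 f -> r0 <= t -> (t%:E < R0)%E ->
    derive1 f t != 0 -> derivable (spow p \o derive1 f) t 1.
  by move=> f_C2 r0t tR0; apply: derivable_spow_comp; case: (C2_profile_derivable f_C2 r0t tR0).
have [phi'_neq0 psi'_neq0] : (forall t, r0 <= t -> (t%:E < R0)%E -> derive1 phi t != 0) /\
    (forall t, r0 <= t -> (t%:E < R0)%E -> derive1 psi t != 0).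
  by split=> t r0t tR0; move: (same_monotony r0t tR0); apply: contraTneq => ->;
    rewrite ?mul0r ?mulr0 ltxx.
apply: (derive1_ratio_ge0 (k := N.-1%:R) (W := fun t => V (t *: ebase i0)) p_ge2) => //.
- exact: le_trans (ltW r0_gt0) r0r1.
- by move=> t /(C2_on_I _ phi_C2) [].
- by move=> t /(C2_on_I _ psi_C2) [].
- by move=> t /(C2_on_I _ phi_C2) [].
- by move=> t /(C2_on_I _ psi_C2) [].
- by move=> t /inI [r0t tR0]; exact: phi_gt0.
- by move=> t /inI [r0t tR0]; exact: psi_gt0.
- by move=> t /inI [r0t tR0]; exact: same_monotony.
- move=> t /inIo [r0t tR0]; have := phi_sub (annulus t r0t tR0).
  move: r0t => /ltW r0t.
  rewrite (radial_operatorE V i0 p_ge2 phi_C2 r0_gt0 r0t tR0 (phi_gt0 r0t tR0)) ?oppr_le0 //.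
  exact: derivable_flux (phi'_neq0 t r0t tR0).
- move=> t /inIo [r0t tR0]; have := psi_super (annulus t r0t tR0).
  move: r0t => /ltW r0t.
  rewrite (radial_operatorE V i0 p_ge2 psi_C2 r0_gt0 r0t tR0 (psi_gt0 r0t tR0)) ?oppr_ge0 //.
  exact: derivable_flux (psi'_neq0 t r0t tR0).
Qed.

Lemma radial_ratio_alternative :
  (forall r, r0 <= r -> (r%:E < R0)%E -> derive1 (fun s => phi s / psi s) r <= 0) \/
  (exists2 rho : R, r0 <= rho /\ (rho%:E < R0)%E &
     forall r, rho <= r -> (r%:E < R0)%E -> 0 <= derive1 (fun s => phi s / psi s) r).
Proof.
have [[r1 r1I r1_pos]|never_pos] := pselect (exists2 r1,
  r0 <= r1 /\ (r1%:E < R0)%E & 0 < derive1 (fun s => phi s / psi s) r1).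
- right; exists r1 => // r r1r rR0.
  exact: radial_ratio_derive_ge0 (proj1 r1I) r1r rR0 r1_pos.
- by left => r r0r rR0; rewrite leNgt; apply/negP => pos; apply: never_pos; exists r.
Qed.

End RadialPair.

Theorem corollary3p4 (R : realType) (N : nat) (p r0 : R) (R0 : \bar R)
  (V : 'rV[R]_N -> R) (phi psi : R -> R) :
  (2 <= N)%N -> 2 <= p -> 0 < r0 -> (r0%:E < R0)%E ->
  (forall x, in_annulus r0 R0 x -> {for x, continuous V}) ->
  ((forall x, in_annulus r0 R0 x -> 0 < V x) \/
   (forall x, in_annulus r0 R0 x -> V x = 0)) ->
  (* u = phi(|x|): positive, radial, strictly monotone, C^2 subsolution *)
  C2_profile r0 R0 phi ->
  (forall r, r0 <= r -> (r%:E < R0)%E -> 0 < phi r) ->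
  strictly_monotone_profile r0 R0 phi ->
  subsolution p V r0 R0 (@radial R N phi) ->
  (* v = psi(|x|): positive, radial, strictly monotone, C^2 supersolution *)
  C2_profile r0 R0 psi ->
  (forall r, r0 <= r -> (r%:E < R0)%E -> 0 < psi r) ->
  strictly_monotone_profile r0 R0 psi ->
  supersolution p V r0 R0 (@radial R N psi) ->
  (forall r, r0 <= r -> (r%:E < R0)%E ->
     derive1 (fun s => phi s / psi s) r <= 0) \/
  (exists2 rho : R, r0 <= rho /\ (rho%:E < R0)%E &
     forall r, rho <= r -> (r%:E < R0)%E ->
       0 <= derive1 (fun s => phi s / psi s) r).
Proof.
move=> N_ge2 p_ge2 r0_gt0 r0R0 _ _ phi_C2 phi_gt0 phi_mono phi_sub.
move=> psi_C2 psi_gt0 psi_mono psi_super.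
pose i0 : 'I_N := Ordinal (leq_trans (isT : 0 < 2)%N N_ge2).
have ratioE r : r0 <= r -> (r%:E < R0)%E -> derive1 (fun s => phi s / psi s) r =
    (derive1 phi r * psi r - phi r * derive1 psi r) / psi r ^+ 2.
  move=> r0r rR0; rewrite derive1_div ?gt_eqF ?psi_gt0 //.
  - by case: (C2_profile_derivable phi_C2 r0r rR0).
  - by case: (C2_profile_derivable psi_C2 r0r rR0).
have same_sign_case := radial_ratio_alternative i0 p_ge2 r0_gt0 phi_C2 psi_C2
  phi_gt0 psi_gt0 phi_sub psi_super.
case: phi_mono => phi'_sgn; case: psi_mono => psi'_sgn.
- by apply: same_sign_case => r r0r rR0; rewrite mulr_gt0 ?phi'_sgn ?psi'_sgn.
- right; exists r0 => [|r r0r rR0]; first by rewrite lexx.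
  rewrite ratioE // divr_ge0 ?sqr_ge0 // subr_ge0 (@le_trans _ _ 0) //.
  + exact: mulr_ge0_le0 (ltW (phi_gt0 _ r0r rR0)) (ltW (psi'_sgn _ r0r rR0)).
  + exact: mulr_ge0 (ltW (phi'_sgn _ r0r rR0)) (ltW (psi_gt0 _ r0r rR0)).
- left => r r0r rR0.
  rewrite ratioE // pmulr_lle0 ?invr_gt0 ?exprn_gt0 ?psi_gt0 // subr_le0 (@le_trans _ _ 0) //.
  + exact: mulr_le0_ge0 (ltW (phi'_sgn _ r0r rR0)) (ltW (psi_gt0 _ r0r rR0)).
  + exact: mulr_ge0 (ltW (phi_gt0 _ r0r rR0)) (ltW (psi'_sgn _ r0r rR0)).
- by apply: same_sign_case => r r0r rR0; rewrite nmulr_rgt0 ?phi'_sgn ?psi'_sgn.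
Qed.
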